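(* Let $G$ be a complete $s$-partite graph ($s\ge 2$), and suppose exactly $r$ of its parts consist of a single vertex. Then $\chi_1(G)=s-r+\left\lceil \frac{r}{2}\right\rceil$.
   Context: A map $f:V(G)\to\{1,\dots,k\}$ is a $1$-relaxed $k$-coloring if every vertex $u$ has at most one neighbor $v$ with $f(v)=f(u)$; $\chi_1(G)$ is the minimum $k$ for which such a coloring exists. *)

From mathcomp Require Import all_boot.
Set Implicit Arguments. Unset Strict Implicit. Unset Printing Implicit Defensive.

Definition relaxed1 (T : finType) (e : rel T) (k : nat) (f : {ffun T -> 'I_k}) : bool :=
  [forall u, #|[set v | e u v && (f v == f u)]| <= 1].

Definition has_relaxed1 (T : finType) (e : rel T) (k : nat) : bool :=
  [exists f : {ffun T -> 'I_k}, relaxed1 e f].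

Lemma has_relaxed1_card (T : finType) (e : rel T) : has_relaxed1 e #|T|.
Proof.
apply/existsP; exists [ffun x => enum_rank x]; apply/forallP => u.
apply: leq_trans (_ : #|[set u]| <= 1); last by rewrite cards1.
apply: subset_leq_card; apply/subsetP => v; rewrite !inE !ffunE.
by case/andP=> _ /eqP /enum_rank_inj ->.
Qed.

Definition chi1 (T : finType) (e : rel T) : nat :=
  ex_minn (ex_intro (fun k => has_relaxed1 e k) _ (has_relaxed1_card e)).

Definition complete_multipartite (T : finType) (e : rel T) (s : nat) (p : T -> 'I_s) : Prop :=
  (forall i : 'I_s, exists x, p x = i) /\ (forall x y, e x y = (p x != p y)).

Definition singleton_parts (T : finType) (s : nat) (p : T -> 'I_s) : nat :=
  #|[set i : 'I_s | #|[set x | p x == i]| == 1]|.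

From mathcomp Require Import all_boot zify.

(* Lower bound: a colour class of a 1-relaxed colouring meets at most two
   parts, since a vertex sees every vertex outside its own part.  Let a class
   lying inside one part give weight 2 to that part, and a class meeting two
   parts give weight 1 to each of them, so that the k classes hand out weight
   at most 2k.  A singleton part gets weight at least 1, and any other part
   gets at least 2: if two of its vertices share a colour, that class cannot
   leave the part (a vertex of the class elsewhere would have two neighbours
   of its colour), otherwise it sees two classes.  Hence 2k >= 2(s - r) + r.
   Upper bound: give each non-singleton part its own colour and pair up the
   singleton parts, each pair sharing a colour. *)

Set Implicit Arguments.
Unset Strict Implicit.
Unset Printing Implicit Defensive.

Lemma chi1_eq (T : finType) (e : rel T) (k : nat) :
  has_relaxed1 e k -> (forall m, has_relaxed1 e m -> k <= m) -> chi1 e = k.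
Proof.
move=> ek k_min; rewrite /chi1; case: ex_minnP => m em m_min.
by apply/eqP; rewrite eqn_leq m_min // k_min.
Qed.

Definition enum_index (T : finType) (A : {set T}) (x : T) : nat :=
  index x (enum A).

Lemma enum_index_lt (T : finType) (A : {set T}) (x : T) :
  x \in A -> enum_index A x < #|A|.
Proof. by rewrite /enum_index cardE index_mem mem_enum. Qed.

Lemma enum_index_inj (T : finType) (A : {set T}) : {in A &, injective (enum_index A)}.
Proof. by move=> x y xA yA /(index_inj x); rewrite !mem_enum; apply. Qed.

Section CompleteMultipartite.

Variables (T I : finType) (e : rel T) (p : T -> I).
Hypothesis e_parts : forall x y, e x y = (p x != p y).

Definition part (i : I) : {set T} := [set x | p x == i].

Definition singleton_part_set : {set I} := [set i | #|part i| == 1].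
Local Notation S := singleton_part_set.

Lemma singleton_part_eq (x y : T) : p x \in S -> p x = p y -> x = y.
Proof.
rewrite inE => /eqP/eq_leq/card_le1_eqP part1 pxy.
by apply: part1; rewrite !inE ?pxy.
Qed.

Lemma has_relaxed1_part_colouring (k : nat) (g : I -> nat) :
  (forall i, g i < k) ->
  (forall u, #|[set v | (p v != p u) && (g (p v) == g (p u))]| <= 1) ->
  has_relaxed1 e k.
Proof.
move=> g_lt g_relaxed; apply/existsP; exists [ffun x => Ordinal (g_lt (p x))].
apply/forallP => u; apply: leq_trans (g_relaxed u).
by apply/subset_leq_card/subsetP => v; rewrite !inE !ffunE e_parts eq_sym.
Qed.

Definition paired_colour (i : I) : nat :=
  if i \in S then #|~: S| + (enum_index S i)./2 else enum_index (~: S) i.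

Lemma paired_colour_lt (i : I) : paired_colour i < #|~: S| + uphalf #|S|.
Proof.
rewrite /paired_colour; case: ifP => iS.
  by have := enum_index_lt iS; lia.
by have := @enum_index_lt _ (~: S) i; rewrite inE iS; lia.
Qed.

Lemma paired_colour_eq (i j : I) :
  i != j -> paired_colour i = paired_colour j ->
  [/\ i \in S, j \in S & (enum_index S i)./2 = (enum_index S j)./2].
Proof.
move=> ij; rewrite /paired_colour.
case iS: (i \in S); case jS: (j \in S) => colour_ij.
- by split=> //; lia.
- by have := @enum_index_lt _ (~: S) j; rewrite inE jS; lia.
- by have := @enum_index_lt _ (~: S) i; rewrite inE iS; lia.
move/enum_index_inj: colour_ij; rewrite !in_setC iS jS => /(_ isT isT) eq_ij.
by rewrite eq_ij eqxx in ij.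
Qed.

Lemma paired_colour_relaxed (u : T) :
  #|[set v | (p v != p u) && (paired_colour (p v) == paired_colour (p u))]| <= 1.
Proof.
apply/card_le1_eqP => v1 v2; rewrite !inE => /andP[uv1 /eqP c1] /andP[uv2 /eqP c2].
have [v1S uS h1] := paired_colour_eq uv1 c1.
have [v2S _ h2] := paired_colour_eq uv2 c2.
have index_neq v : p v \in S -> p v != p u -> enum_index S (p v) != enum_index S (p u).
  by move=> vS; apply: contraNneq => /enum_index_inj ->.
have := index_neq _ v1S uv1; have := index_neq _ v2S uv2 => n2 n1.
have /enum_index_inj i12 : enum_index S (p v1) = enum_index S (p v2) by lia.
by apply/esym/(singleton_part_eq v1S)/i12.
Qed.

Lemma has_relaxed1_paired_colour : has_relaxed1 e (#|~: S| + uphalf #|S|).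
Proof.
exact: has_relaxed1_part_colouring paired_colour_lt paired_colour_relaxed.
Qed.

Section LowerBound.

Hypothesis parts_nonempty : forall i, exists x, p x = i.
Variables (k : nat) (f : {ffun T -> 'I_k}).
Hypothesis f_relaxed : relaxed1 e f.

Definition colour_parts (c : 'I_k) : {set I} := p @: [set x | f x == c].

Lemma mem_colour_parts (x : T) : p x \in colour_parts (f x).
Proof. by apply/imsetP; exists x; rewrite ?inE. Qed.

Lemma card_colour_parts (c : 'I_k) : #|colour_parts c| <= 2.
Proof.
have [->|[i0 /imsetP[x]]] := set_0Vmem (colour_parts c); first by rewrite cards0.
rewrite inE => /eqP <- _; rewrite (cardsD1 (p x)) mem_colour_parts ltnS.
apply: leq_trans (forallP f_relaxed x); apply: leq_trans (leq_imset_card p _).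
apply/subset_leq_card/subsetP => j /setD1P[jx /imsetP[y]]; rewrite inE => /eqP fy jy.
by apply/imsetP; exists y; rewrite // inE e_parts eq_sym -jy jx fy eqxx.
Qed.

Lemma colour_parts_confined (x y : T) :
  p x = p y -> x != y -> f x = f y -> colour_parts (f x) = [set p x].
Proof.
move=> pxy xy fxy; apply/eqP; rewrite eqEsubset sub1set mem_colour_parts andbT.
apply/subsetP => i /imsetP[z]; rewrite !inE => /eqP fz ->; apply/negPn/negP => zx.
have /card_le1_eqP/(_ x y) := forallP f_relaxed z.
rewrite !inE !e_parts -pxy zx fz -fxy eqxx => /(_ isT isT) yx.
by rewrite yx eqxx in xy.
Qed.

Definition colour_weight (c : 'I_k) (i : I) : nat :=
  if i \in colour_parts c then (if #|colour_parts c| == 1 then 2 else 1) else 0.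

Lemma sum_colour_weight (c : 'I_k) : \sum_i colour_weight c i <= 2.
Proof.
rewrite /colour_weight -big_mkcond /= sum_nat_const.
by have := card_colour_parts c; case: #|_| => [|[|[|]]].
Qed.

Lemma colour_weight_gt0 (x : T) : 0 < colour_weight (f x) (p x).
Proof. by rewrite /colour_weight mem_colour_parts; case: ifP. Qed.

Definition part_demand (i : I) : nat := if i \in S then 1 else 2.

Lemma part_demand_le (i : I) : part_demand i <= \sum_c colour_weight c i.
Proof.
have [x <-] := parts_nonempty i.
rewrite /part_demand (bigD1 (f x)) //=; case: ifP => [_|xS].
  exact: leq_trans (colour_weight_gt0 x) (leq_addr _ _).
have [y] : exists y, y \in part (p x) :\ x.
  by apply/card_gt0P; move: xS; rewrite inE (cardsD1 x) !inE eqxx; case: #|_ :\ x|.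
rewrite !inE => /andP[yx pyx].
have [fyx|fyx] := eqVneq (f y) (f x).
  rewrite -fyx -(eqP pyx) /colour_weight (colour_parts_confined (eqP pyx) yx fyx).
  by rewrite set11 cards1 leq_addr.
rewrite (bigD1 (f y)) //= -[2]/(1 + 1) leq_add ?colour_weight_gt0 // -(eqP pyx).
exact: leq_trans (colour_weight_gt0 y) (leq_addr _ _).
Qed.

Lemma relaxed1_lower_bound : 2 * #|I| <= 2 * k + #|S|.
Proof.
suff <- : \sum_i part_demand i + #|S| = 2 * #|I|.
  rewrite leq_add2r; apply: leq_trans (leq_sum _ (fun i _ => part_demand_le i)) _.
  rewrite exchange_big -[k in 2 * k]card_ord -sum1_card big_distrr /=.
  by apply: leq_sum => c _; rewrite muln1 sum_colour_weight.
have -> : 2 * #|I| = \sum_(i : I) 2 by rewrite sum_nat_const mulnC.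
rewrite -sum1_card [X in _ + X]big_mkcond -big_split /=.
by apply: eq_bigr => i _; rewrite /part_demand; case: ifP.
Qed.

End LowerBound.

End CompleteMultipartite.

Unset Implicit Arguments.

Theorem theorem4p3 (T : finType) (e : rel T) (s r : nat) (p : T -> 'I_s) :
  2 <= s ->
  complete_multipartite e p ->
  singleton_parts p = r ->
  chi1 e = s - r + uphalf r.
Proof.
(* The formula also holds for s < 2. *)
move=> _ [parts_nonempty e_parts] <-.
have card_S : #|singleton_part_set p| = singleton_parts p by [].
have := cardsC (singleton_part_set p); rewrite card_ord card_S => card_split.
have card_S_setC : #|~: singleton_part_set p| = s - singleton_parts p by lia.
apply: chi1_eq => [|k /existsP[f f_relaxed]].
  by rewrite -card_S_setC -card_S; exact: has_relaxed1_paired_colour.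
have := relaxed1_lower_bound e_parts parts_nonempty f_relaxed.
by rewrite card_ord card_S; lia.
Qed.
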